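(* Let $\mathbb P$ be a probability measure on $\Omega_+$ under which $(\omega(x))_{x\ge0}$ is stationary. Then $E_0[D^x_\infty]\le1$ for all $x\ge0$.
   Context: Cookie environments: $\Omega_+=([1/2,1]^{\mathbb N})^{\mathbb Z}$, $\omega(x)=(\omega(x,i))_{i\ge1}$. $P_{x,\omega}$ is the law of the nearest-neighbor process $(X_n)_{n\ge0}$ with $X_0=x$ which, on its $i$-th visit to site $z$, jumps to $z+1$ with probability $\omega(z,i)$ and to $z-1$ otherwise. Annealed measure $P_x[\cdot]=\mathbb E[P_{x,\omega}[\cdot]]$, with expectation $E_x$. $D_n^x=\sum_{i=1}^{\#\{m<n:X_m=x\}}(2\omega(x,i)-1)$ and $D_\infty^x=\lim_{n\to\infty}D_n^x$ (total drift of the cookies at $x$ eaten by the walk). *)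

From HB Require Import structures.
From mathcomp Require Import all_boot all_order all_algebra.
From mathcomp Require Import all_classical all_reals all_analysis.
Set Implicit Arguments. Unset Strict Implicit. Unset Printing Implicit Defensive.
Import Order.TTheory GRing.Theory Num.Theory.
Local Open Scope classical_set_scope.
Local Open Scope ring_scope.

Section Cookies.
Variable R : realType.

Definition cookie : Type := {p : R | (2^-1 <= p <= 1)%R}.

Lemma cookie1_proof : (2^-1 <= (1:R) <= 1)%R.
Proof. by rewrite lexx andbT invf_le1 // ler1n. Qed.

HB.instance Definition _ := Choice.on cookie.
HB.instance Definition _ := isPointed.Build cookie (exist _ 1 cookie1_proof).

(* Omega_+ = ([1/2,1]^N)^Z ; omega z i is the (i+1)-th cookie at site z *)
Definition Omega0 : Type := int -> nat -> cookie.

Definition coord (z : int) (i : nat) (w : Omega0) : R := sval (w z i).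

Definition coordSets : set (set Omega0) :=
  [set A | exists z i (B : set R), measurable B /\ A = coord z i @^-1` B].

Definition coordSetsNonneg : set (set Omega0) :=
  [set A | exists z i (B : set R), (0 <= z)%R /\ measurable B /\ A = coord z i @^-1` B].

Definition Omega := g_sigma_algebraType coordSets.

Definition shift (k : nat) (w : Omega) : Omega := fun z => w (z + k%:Z)%R.

Definition stationary_nonneg (P : probability Omega R) : Prop :=
  forall (k : nat) (A : set Omega),
    <<s coordSetsNonneg >> A -> P (shift k @^-1` A) = P A.

Definition pos (x : int) (s : nat -> bool) (m : nat) : int :=
  (x + \sum_(l < m) (if s l then 1 else -1))%R.

Definition visits (x : int) (s : nat -> bool) (m : nat) (z : int) : nat :=
  (\sum_(l < m) (pos x s l == z : nat))%N.

(* probability of step m: at its (visits+1)-th visit to site z the walk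
   uses cookie omega(z, visits) (0-based index) *)
Definition stepP (w : Omega) (x : int) (s : nat -> bool) (m : nat) : R :=
  let z := pos x s m in
  let c := coord z (visits x s m z) w in
  if s m then c else 1 - c.

Definition pathP (w : Omega) (x : int) (s : nat -> bool) (n : nat) : R :=
  \prod_(m < n) stepP w x s m.

Definition Dn (w : Omega) (x : int) (s : nat -> bool) (n : nat) (y : int) : R :=
  \sum_(i < visits x s n y) (2 * coord y i w - 1).

Definition qE_Dn (w : Omega) (x : int) (n : nat) (y : int) : R :=
  \sum_(t : n.-tuple bool) pathP w x (nth false t) n * Dn w x (nth false t) n y.

(* quenched expectation E_{x,omega}[D_infty^y]: D_n^y is nonnegative and
   nondecreasing in n, so by monotone convergence this is lim_n E[D_n^y] *)
Definition qE_Dinf (w : Omega) (x : int) (y : int) : \bar R :=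
  limn (fun n => (qE_Dn w x n y)%:E).

End Cookies.

From Pilot Require Import Defs.
From HB Require Import structures.
From mathcomp Require Import all_boot all_order all_algebra.
From mathcomp Require Import all_classical all_reals all_analysis.
From mathcomp Require Import ring lra zify measurable_realfun.
Import Order.TTheory GRing.Theory Num.Theory.
Local Open Scope ring_scope.
Set Implicit Arguments. Unset Strict Implicit. Unset Printing Implicit Defensive.

(* The quenched expectation of an additive functional of the walk satisfies a
   first-step recursion in which the environment loses the cookie just eaten;
   every estimate below is an induction on the time horizon through it.
   Since [2 c - 1 = c - (1 - c)], the drift eaten at [0] plus the expected
   number of left steps from [0] is the expected number of right steps from
   [0]; all right crossings of the edge [{0, 1}] but the first are preceded by
   a left crossing, so this is at most [1] plus the expected number of left
   steps from [1]. A nonnegative functional supported at a site [y] can only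
   grow if a walk started at or left of [y] is instead started at [y], with
   every cookie left of [y] replaced by [1]. The functionals then depend only
   on the cookies right of the starting site, so by stationarity the two
   left-step terms have the same annealed expectation and cancel, and the
   drift at [x] has the expectation of the drift at [0]. Monotone convergence
   lets the horizon go to infinity. *)

Section FirstStepAnalysis.
Variable R : realType.
Implicit Types (w : Omega R) (p x y z : int) (s : nat -> bool) (b : bool) (n : nat).

Definition eat_cookie p w : Omega R := fun z i => w z (i + (z == p))%N.

Definition jump b : int := if b then 1 else -1.

Definition scons b s : nat -> bool := fun m => if m is m'.+1 then s m' else b.

Lemma nth_cons_tuple b n (t : n.-tuple bool) :
  nth false (b :: t) = scons b (nth false t).
Proof. by apply/funext => -[|m]. Qed.

Lemma sum_tuple_scons n (F : (nat -> bool) -> R) :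
  \sum_(t : n.+1.-tuple bool) F (nth false t) =
  \sum_(b : bool) \sum_(t : n.-tuple bool) F (scons b (nth false t)).
Proof.
rewrite pair_big /= (reindex (fun bt : bool * n.-tuple bool => [tuple of bt.1 :: bt.2])) /=.
  by apply: eq_bigr => -[b t] _ /=; rewrite nth_cons_tuple.
exists (fun t : n.+1.-tuple bool => (thead t, [tuple of behead t])).
  by move=> [b t] _ /=; congr pair; apply: val_inj.
by move=> t _; rewrite /= [RHS]tuple_eta; apply: val_inj.
Qed.

Lemma pos_scons0 x b s : Defs.pos x (scons b s) 0 = x.
Proof. by rewrite /Defs.pos big_ord0 addr0. Qed.

Lemma pos_sconsS x b s m : Defs.pos x (scons b s) m.+1 = Defs.pos (x + jump b) s m.
Proof. by rewrite /Defs.pos big_ord_recl /= -addrA. Qed.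

Lemma visits0 x s z : visits x s 0 z = 0%N.
Proof. by rewrite /visits big_ord0. Qed.

Lemma visits_sconsS x b s m z :
  visits x (scons b s) m.+1 z = ((x == z) + visits (x + jump b) s m z)%N.
Proof.
rewrite /visits big_ord_recl /= pos_scons0; congr addn.
by apply: eq_bigr => i _; rewrite /bump /= pos_sconsS.
Qed.

Lemma stepP_scons0 w x b s :
  stepP w x (scons b s) 0 = if b then Defs.coord x 0 w else 1 - Defs.coord x 0 w.
Proof. by rewrite /stepP pos_scons0 visits0. Qed.

Lemma stepP_sconsS w x b s m :
  stepP w x (scons b s) m.+1 = stepP (eat_cookie x w) (x + jump b) s m.
Proof. by rewrite /stepP pos_sconsS visits_sconsS /= /Defs.coord /eat_cookie addnC eq_sym. Qed.

Lemma pathP_scons w x b s n :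
  Defs.pathP w x (scons b s) n.+1 =
  (if b then Defs.coord x 0 w else 1 - Defs.coord x 0 w)
    * Defs.pathP (eat_cookie x w) (x + jump b) s n.
Proof.
rewrite /Defs.pathP big_ord_recl stepP_scons0; congr (_ * _).
by apply: eq_bigr => i _; rewrite /bump /= stepP_sconsS.
Qed.

Lemma Dn_scons w x b s n y :
  Dn w x (scons b s) n.+1 y =
  (x == y)%:R * (2 * Defs.coord y 0 w - 1) + Dn (eat_cookie x w) (x + jump b) s n y.
Proof.
rewrite /Dn visits_sconsS; have [<-|nxy] := eqVneq x y.
  rewrite add1n big_ord_recl mul1r; congr (_ + _).
  by apply: eq_bigr => i _; rewrite /Defs.coord /eat_cookie eqxx addn1.
rewrite add0n mul0r add0r; apply: eq_bigr => i _.
by rewrite /Defs.coord /eat_cookie eq_sym (negbTE nxy) addn0.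
Qed.

Lemma sum_pathP w x n : \sum_(t : n.-tuple bool) Defs.pathP w x (nth false t) n = 1.
Proof.
elim: n x w => [|n IH] x w.
  under eq_bigr do rewrite /Defs.pathP big_ord0.
  by rewrite sumr_const card_tuple expn0.
rewrite (sum_tuple_scons _ (fun s => Defs.pathP w x s n.+1)) big_bool /=.
under eq_bigr do rewrite pathP_scons.
under [X in _ + X]eq_bigr do rewrite pathP_scons.
by rewrite -!mulr_sumr !IH !mulr1 addrC subrK.
Qed.

(* [reward G n p w] is the quenched expectation, for the walk started at [p],
   of [\sum_(m < n) G X_m c_m], where [c_m] is the cookie eaten at time [m]. *)
Fixpoint reward (G : int -> R -> R) n p w : R :=
  if n is n'.+1 then
    G p (Defs.coord p 0 w)
    + Defs.coord p 0 w * reward G n' (p + 1) (eat_cookie p w)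
    + (1 - Defs.coord p 0 w) * reward G n' (p - 1) (eat_cookie p w)
  else 0.

Definition drift_at y z (c : R) : R := (z == y)%:R * (2 * c - 1).

Lemma qE_Dn_first_step w x n y :
  qE_Dn w x n.+1 y =
  drift_at y x (Defs.coord x 0 w)
  + Defs.coord x 0 w * qE_Dn (eat_cookie x w) (x + 1) n y
  + (1 - Defs.coord x 0 w) * qE_Dn (eat_cookie x w) (x - 1) n y.
Proof.
rewrite /qE_Dn (sum_tuple_scons _ (fun s => Defs.pathP w x s n.+1 * Dn w x s n.+1 y)).
rewrite big_bool /=.
under eq_bigr do rewrite pathP_scons Dn_scons -mulrA mulrDr.
under [X in _ + X]eq_bigr do rewrite pathP_scons Dn_scons -mulrA mulrDr.
rewrite -!mulr_sumr !big_split /= -!mulr_suml !sum_pathP !mul1r /drift_at /jump.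
have -> : (x == y)%:R * (2 * Defs.coord y 0 w - 1) = (x == y)%:R * (2 * Defs.coord x 0 w - 1).
  by case: eqVneq => [->|_]; rewrite ?mul0r.
ring.
Qed.

Lemma qE_Dn_reward w x n y : qE_Dn w x n y = reward (drift_at y) n x w.
Proof.
elim: n x w => [|n IH] x w.
  by rewrite /qE_Dn big1 // => t _; rewrite /Dn visits0 big_ord0 mulr0.
by rewrite qE_Dn_first_step /= !IH.
Qed.

End FirstStepAnalysis.

Section RewardBounds.
Variable R : realType.
Implicit Types (w : Omega R) (p y z : int) (n : nat) (G : int -> R -> R).

Lemma coord_cookie w z i : 2^-1 <= Defs.coord z i w <= 1.
Proof. exact: svalP (w z i). Qed.

Lemma coord_unit w z i : 0 <= Defs.coord z i w <= 1.
Proof.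
have /andP[c_ge c_le1] := coord_cookie w z i.
by rewrite c_le1 andbT (le_trans _ c_ge) // invr_ge0.
Qed.

Lemma convex_comb_le (c a a' b b' : R) : 0 <= c <= 1 -> a <= a' -> b <= b' ->
  c * a + (1 - c) * b <= c * a' + (1 - c) * b'.
Proof. by move=> /andP[c_ge0 c_le1] ha hb; rewrite lerD // ler_wpM2l // subr_ge0. Qed.

Lemma eq_reward G G' n p w : G =2 G' -> reward G n p w = reward G' n p w.
Proof. by move=> eqG; elim: n p w => [|n IH] p w //=; rewrite eqG !IH. Qed.

Lemma reward_le_horizon G n p w :
  (forall z c, 2^-1 <= c <= 1 -> G z c <= 1) -> reward G n p w <= n%:R.
Proof.
move=> G_le1; elim: n p w => [|n IH] p w //=.
have := convex_comb_le (coord_unit w p 0)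
  (IH (p + 1) (eat_cookie p w)) (IH (p - 1) (eat_cookie p w)).
have := G_le1 p _ (coord_cookie w p 0).
rewrite -natr1; lra.
Qed.

Section NonnegativeReward.
Variable G : int -> R -> R.
Hypothesis G_ge0 : forall z c, 2^-1 <= c <= 1 -> 0 <= G z c.

Lemma reward_ge0 n p w : 0 <= reward G n p w.
Proof.
elim: n p w => [|n IH] p w //=.
have := convex_comb_le (coord_unit w p 0)
  (IH (p + 1) (eat_cookie p w)) (IH (p - 1) (eat_cookie p w)).
have := G_ge0 p (coord_cookie w p 0).
rewrite !mulr0 addr0; lra.
Qed.

Lemma reward_leS n p w : reward G n p w <= reward G n.+1 p w.
Proof.
elim: n p w => [|n IH] p w /=.
  by rewrite !mulr0 !addr0 G_ge0 // coord_cookie.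
have := convex_comb_le (coord_unit w p 0)
  (IH (p + 1) (eat_cookie p w)) (IH (p - 1) (eat_cookie p w)).
rewrite /=; lra.
Qed.

Lemma reward_le m n p w : (m <= n)%N -> reward G m p w <= reward G n p w.
Proof.
elim: n => [|n IH]; first by rewrite leqn0 => /eqP ->.
rewrite leq_eqVlt => /predU1P[->//|/IH le_mn].
exact: le_trans le_mn (reward_leS _ _ _).
Qed.

End NonnegativeReward.

Lemma eat_cookie_shift k p w :
  eat_cookie p (Defs.shift k w) = Defs.shift k (eat_cookie (p + k%:Z) w).
Proof.
apply/funext => z; apply/funext => i; rewrite /eat_cookie /Defs.shift.
by rewrite (_ : (z + k%:Z == p + k%:Z) = (z == p)) //; lia.
Qed.

Lemma reward_shift G k n p w :
  reward G n (p + k%:Z) w = reward (fun z => G (z + k%:Z)) n p (Defs.shift k w).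
Proof.
elim: n p w => [|n IH] p w //=.
rewrite !eat_cookie_shift -!IH (addrAC p 1) (addrAC p (-1)).
by rewrite /Defs.shift /Defs.coord.
Qed.

End RewardBounds.

Section Wall.
Variable R : realType.
Implicit Types (w : Omega R) (p q y z : int) (n : nat) (G : int -> R -> R).

Definition cookie_one : cookie R := exist _ 1 (cookie1_proof R).

Definition wall y w : Omega R := fun z i => if z < y then cookie_one else w z i.

Lemma wall_shift (k : nat) y w :
  Defs.shift k (wall (y + k%:Z) w) = wall y (Defs.shift k w).
Proof.
apply/funext => z; apply/funext => i; rewrite /wall /Defs.shift.
by rewrite (_ : (z + k%:Z < y + k%:Z) = (z < y)) //; lia.
Qed.

Lemma wall_wall y y' w : y <= y' -> wall y' (wall y w) = wall y' w.
Proof.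
move=> le_yy'; apply/funext => z; apply/funext => i; rewrite /wall.
by case: ifP => // /negbT z_ge; rewrite ifF //; lia.
Qed.

Lemma reward_wall_shift G (k : nat) n w :
  reward G n k%:Z (wall k%:Z w) =
  reward (fun z => G (z + k%:Z)) n 0 (wall 0 (Defs.shift k w)).
Proof. by rewrite -[in LHS](add0r k%:Z) reward_shift -wall_shift add0r. Qed.

Section Domination.
Variables (G : int -> R -> R) (y : int).
Hypothesis G_ge0 : forall z c, 2^-1 <= c <= 1 -> 0 <= G z c.
Hypothesis G_supp : forall z c, z != y -> G z c = 0.

Definition walled_like w w' :=
  (forall z i, y <= z -> Defs.coord z i w = Defs.coord z i w') /\
  (forall z i, z < y -> Defs.coord z i w' = 1).

Lemma walled_like_wall w : walled_like w (wall y w).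
Proof.
split=> z i z_y; rewrite /Defs.coord /wall; last by rewrite z_y.
by rewrite ifF //; lia.
Qed.

Lemma walled_like_eat q w w' :
  walled_like w w' -> walled_like (eat_cookie q w) (eat_cookie q w').
Proof. by move=> [agree wall1]; split=> z i z_y; [apply: agree | apply: wall1]. Qed.

Lemma walled_like_eatl q w w' : q < y ->
  walled_like w w' -> walled_like (eat_cookie q w) w'.
Proof.
move=> q_lt [agree wall1]; split=> // z i z_ge.
have z_q : (z == q) = false by lia.
by rewrite -agree // /Defs.coord /eat_cookie z_q addn0.
Qed.

Lemma walled_like_eatr q w w' : q < y ->
  walled_like w w' -> walled_like w (eat_cookie q w').
Proof.
move=> q_lt [agree wall1]; split=> z i z_y; last exact: wall1.
have z_q : (z == q) = false by lia.
by rewrite agree // /Defs.coord /eat_cookie z_q addn0.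
Qed.

(* Right of the wall the two environments agree; left of it, [w'] sends the
   walk straight back, while in [w] the walk earns nothing before it returns
   to [y], which costs at least one step. *)
Definition dominated_right n := forall p w w',
  walled_like w w' -> y <= p -> reward G n p w <= reward G n p w'.

Definition dominated_left n := forall p w w',
  walled_like w w' -> p < y -> reward G n.+1 p w <= reward G n y w'.

Lemma reward_off_wall n w' : Defs.coord (y - 1) 0 w' = 1 ->
  reward G n.+1 (y - 1) w' = reward G n y (eat_cookie (y - 1) w').
Proof.
by move=> c1 /=; rewrite c1 G_supp ?subrr ?mul0r ?addr0 ?mul1r ?add0r ?subrK //; lia.
Qed.

Lemma dominated_rightS n :
  (forall m, (m < n)%N -> dominated_right m /\ dominated_left m) -> dominated_right n.
Proof.
case: n => [|m] IH p w w' ww' p_ge //=.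
rewrite (ww'.1 p 0 p_ge).
have ww'_eat := walled_like_eat p ww'.
rewrite -!addrA lerD2l; apply: convex_comb_le; first exact: coord_unit.
  by apply: (IH m _).1 => //; lia.
have [y_lt|p_le] := ltP y p; first by apply: (IH m _).1 => //; lia.
have p_y : p = y by lia.
subst p; case: m IH ww'_eat => [|k] IH ww'_eat //.
apply: le_trans ((IH k _).2 _ _ _ ww'_eat _) _ => //; first by lia.
have [_ wall1] := ww'_eat.
rewrite reward_off_wall; last by apply: wall1; lia.
apply: (IH k _).1 => //; apply: walled_like_eatr; first by lia.
by split.
Qed.

Lemma dominated_leftS n :
  (forall m, (m < n)%N -> dominated_right m /\ dominated_left m) ->
  dominated_right n -> dominated_left n.
Proof.
move=> IH dom_n p w w' ww' p_lt /=.
rewrite G_supp ?add0r; last by apply/eqP; lia.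
have ww'_eat := walled_like_eatl p_lt ww'.
have reach_y q : q <= y -> reward G n q (eat_cookie p w) <= reward G n y w'.
  rewrite le_eqVlt => /predU1P[->|q_lt]; first exact: dom_n.
  case: n IH {dom_n} => [|k] IH //.
  apply: le_trans ((IH k _).2 _ _ _ ww'_eat q_lt) (reward_leS G_ge0 _ _ _) => //.
have := convex_comb_le (coord_unit w p 0) (reach_y (p + 1) _) (reach_y (p - 1) _).
by rewrite -mulrDl subrKC mul1r; apply; lia.
Qed.

Lemma dominated n : dominated_right n /\ dominated_left n.
Proof.
elim/ltn_ind: n => n IH.
have dom_n := dominated_rightS IH.
by split; last exact: dominated_leftS.
Qed.

Lemma reward_le_wall n p w : p <= y -> reward G n p w <= reward G n y (wall y w).
Proof.
rewrite le_eqVlt => /predU1P[->|p_lt].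
  exact: (dominated n).1 (walled_like_wall w) _.
apply: le_trans (reward_leS G_ge0 _ _ _) _.
exact: (dominated n).2 (walled_like_wall w) _.
Qed.

End Domination.

Definition left_at y z (c : R) : R := (z == y)%:R * (1 - c).

Lemma drift_at_ge0 y z (c : R) : 2^-1 <= c <= 1 -> 0 <= drift_at y z c.
Proof. by move=> /andP[c_ge c_le]; rewrite mulr_ge0 //; lra. Qed.

Lemma left_at_ge0 y z (c : R) : 2^-1 <= c <= 1 -> 0 <= left_at y z c.
Proof. by move=> /andP[c_ge c_le]; rewrite mulr_ge0 //; lra. Qed.

Lemma drift_at_supp y z (c : R) : z != y -> drift_at y z c = 0.
Proof. by move=> /negbTE z_y; rewrite /drift_at z_y mul0r. Qed.

Lemma left_at_supp y z (c : R) : z != y -> left_at y z c = 0.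
Proof. by move=> /negbTE z_y; rewrite /left_at z_y mul0r. Qed.

Lemma crossing_indicator_le p (c : R) : 0 <= c <= 1 ->
  (p == 0)%:R * c + c * (p + 1 <= 0)%R%:R + (1 - c) * (p - 1 <= 0)%R%:R
    <= (p <= 0)%R%:R + (p == 1)%:R * (1 - c).
Proof.
move=> /andP[c_ge0 c_le1].
case: (p == 0) / eqP; case: (p == 1) / eqP;
  case: (p + 1 <= 0) / idP; case: (p - 1 <= 0) / idP; case: (p <= 0) / idP;
  rewrite /= ?mul0r ?mulr0 ?mul1r ?mulr1 ?addr0 ?add0r => *; try (exfalso; lia); lra.
Qed.

Lemma drift_left_le_crossings n p w :
  reward (drift_at 0) n p w + reward (left_at 0) n p w <=
  (p <= 0)%R%:R + reward (left_at 1) n p w.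
Proof.
elim: n p w => [|n IH] p w /=; first by rewrite !addr0 ler0n.
have := convex_comb_le (coord_unit w p 0)
  (IH (p + 1) (eat_cookie p w)) (IH (p - 1) (eat_cookie p w)).
have := crossing_indicator_le p (coord_unit w p 0).
rewrite /drift_at /left_at !mulrDr; lra.
Qed.

End Wall.

Section WalledRewards.
Variable R : realType.
Implicit Types (w : Omega R) (n : nat).

Definition walled_drift n w : R := reward (drift_at 0) n 0 (wall 0 w).

Definition walled_left n w : R := reward (left_at 0) n 0 (wall 0 w).

Lemma reward_drift_le_walled (x : nat) n w :
  reward (drift_at x%:Z) n 0 w <= walled_drift n (Defs.shift x w).
Proof.
have drift_shift : (fun z => drift_at x%:Z (z + x%:Z)) =2 drift_at (R := R) 0.
  by move=> z c; rewrite /drift_at (_ : (z + x%:Z == x%:Z) = (z == 0)) //; lia.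
rewrite /walled_drift -(eq_reward _ _ _ drift_shift) -reward_wall_shift.
exact: reward_le_wall (@drift_at_ge0 R _) (@drift_at_supp R _) _ _ _ _.
Qed.

Lemma walled_drift_left_le n w :
  walled_drift n w + walled_left n w <= 1 + walled_left n (Defs.shift 1 w).
Proof.
have left_shift : (fun z => left_at 1 (z + 1%:Z)) =2 left_at (R := R) 0.
  by move=> z c; rewrite /left_at (_ : (z + 1%:Z == 1) = (z == 0)) //; lia.
apply: le_trans (drift_left_le_crossings _ _ _) _; rewrite lexx lerD2l.
rewrite /walled_left -(eq_reward _ _ _ left_shift) -reward_wall_shift -(wall_wall w ler01).
exact: reward_le_wall (@left_at_ge0 R _) (@left_at_supp R _) _ _ _ _.
Qed.

Lemma walled_drift_ge0 n w : 0 <= walled_drift n w.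
Proof. exact/reward_ge0/drift_at_ge0. Qed.

Lemma walled_left_ge0 n w : 0 <= walled_left n w.
Proof. exact/reward_ge0/left_at_ge0. Qed.

Lemma walled_left_le n w : walled_left n w <= n%:R.
Proof.
apply: reward_le_horizon => z c /andP[c_ge c_le].
by rewrite /left_at; case: (_ == _); rewrite ?mul1r ?mul0r; lra.
Qed.

End WalledRewards.

Local Notation Omega_nonneg R := (g_sigma_algebraType (@coordSetsNonneg R)).

Section Measurability.
Variable R : realType.
Local Open Scope classical_set_scope.

Lemma measurable_coord z i : measurable_fun setT (Defs.coord z i : Omega R -> R).
Proof. by move=> _ B mB; rewrite setTI; apply: sub_sigma_algebra; exists z, i, B. Qed.

Lemma measurable_into_Omega d (T : measurableType d) (f : T -> Omega R) :
  (forall z i (B : set R), measurable B -> measurable (f @^-1` (Defs.coord z i @^-1` B))) ->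
  measurable_fun setT f.
Proof.
move=> mf; apply: (@measurability _ _ _ (Omega R) setT f (@coordSets R)) => //.
by move=> _ [_ [z [i [B [mB ->]]]] <-]; rewrite setTI; apply: mf.
Qed.

Lemma measurable_into_Omega_nonneg d (T : measurableType d) (f : T -> Omega_nonneg R) :
  (forall z i (B : set R), 0 <= z -> measurable B ->
     measurable (f @^-1` (Defs.coord z i @^-1` B))) ->
  measurable_fun setT f.
Proof.
move=> mf; apply: (@measurability _ _ _ (Omega_nonneg R) setT f (@coordSetsNonneg R)) => //.
by move=> _ [_ [z [i [B [z_ge0 [mB ->]]]]] <-]; rewrite setTI; apply: mf.
Qed.

Lemma measurable_eat_cookie p : measurable_fun setT (eat_cookie p : Omega R -> Omega R).
Proof.
apply: measurable_into_Omega => z i B mB.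
by apply: sub_sigma_algebra; exists z, (i + (z == p))%N, B.
Qed.

Lemma measurable_reward (G : int -> R -> R) n p :
  (forall z, measurable_fun setT (G z)) ->
  measurable_fun setT (fun w : Omega R => reward G n p w).
Proof.
move=> mG; elim: n p => [|n IH] p /=; first exact: measurable_cst.
have m_eat := measurableT_comp (IH _) (measurable_eat_cookie p).
apply: measurable_funD; first apply: measurable_funD.
- exact: measurableT_comp (mG p) (measurable_coord p 0).
- by apply: measurable_funM; [exact: measurable_coord | exact: m_eat].
- apply: measurable_funM; last exact: m_eat.
  exact: measurable_funB (measurable_cst _) (measurable_coord p 0).
Qed.

Lemma measurable_drift_at y z : measurable_fun setT (drift_at y z : R -> R).
Proof. by apply: measurable_funM => //; apply: measurable_funB => //; apply: measurable_funM. Qed.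

Lemma measurable_left_at y z : measurable_fun setT (left_at y z : R -> R).
Proof. by apply: measurable_funM => //; apply: measurable_funB. Qed.

Lemma measurable_wall y : 0 <= y -> measurable_fun setT (wall y : Omega_nonneg R -> Omega R).
Proof.
move=> y_ge0; apply: measurable_into_Omega => z i B mB.
have [z_lt|z_ge] := ltP z y.
  have coord_wall w : Defs.coord z i (wall y w) = 1 by rewrite /Defs.coord /wall z_lt.
  have [B1|nB1] := pselect (B 1).
    rewrite (_ : _ @^-1` _ = setT) //.
    by apply/seteqP; split=> // w _; rewrite /preimage /= coord_wall.
  rewrite (_ : _ @^-1` _ = set0) //.
  by apply/seteqP; split=> // w; rewrite /preimage /= coord_wall.
apply: sub_sigma_algebra; exists z, i, B; split; first exact: le_trans z_ge.
split=> //; apply/seteqP; split=> w; rewrite /preimage /= /Defs.coord /wall ltNge z_ge //.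
Qed.

Lemma measurable_shift_nonneg (k : nat) :
  measurable_fun setT (Defs.shift k : Omega R -> Omega_nonneg R).
Proof.
apply: measurable_into_Omega_nonneg => z i B z_ge0 mB.
by apply: sub_sigma_algebra; exists (z + k%:Z), i, B.
Qed.

Lemma measurable_id_nonneg : measurable_fun setT (id : Omega R -> Omega_nonneg R).
Proof.
apply: measurable_into_Omega_nonneg => z i B z_ge0 mB.
by apply: sub_sigma_algebra; exists z, i, B.
Qed.

Lemma measurable_walled_reward (G : int -> R -> R) n :
  (forall z, measurable_fun setT (G z)) ->
  measurable_fun setT (fun w : Omega_nonneg R => (reward G n 0 (wall 0 w))%:E).
Proof.
move=> mG; apply/measurable_EFinP.
exact: measurableT_comp (measurable_reward n 0 mG) (measurable_wall (lexx 0)).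
Qed.

End Measurability.

Section Integration.
Variables (R : realType) (P : probability (Omega R) R).
Local Open Scope classical_set_scope.
Local Open Scope ereal_scope.

Lemma measurable_from_nonneg (f : Omega_nonneg R -> \bar R) :
  measurable_fun setT f -> measurable_fun setT (fun w : Omega R => f w).
Proof. by move=> mf; apply: measurableT_comp mf (@measurable_id_nonneg R). Qed.

Lemma measurable_qE_Dn x n y : measurable_fun setT (fun w : Omega R => (qE_Dn w x n y)%:E).
Proof.
have -> : (fun w : Omega R => (qE_Dn w x n y)%:E) = (fun w => (reward (drift_at y) n x w)%:E).
  by apply/funext => w; rewrite qE_Dn_reward.
apply/measurable_EFinP; apply: measurable_reward => z; exact: measurable_drift_at.
Qed.

Lemma nondecreasing_integral_qE_Dn x y :
  {homo (fun n => \int[P]_w (qE_Dn w x n y)%:E) : m n / (m <= n)%N >-> m <= n}.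
Proof.
move=> m n le_mn; apply: ge0_le_integral => //; try exact: measurable_qE_Dn.
- by move=> w _; rewrite lee_fin qE_Dn_reward; apply/reward_ge0/drift_at_ge0.
- by move=> w _; rewrite lee_fin !qE_Dn_reward; apply/reward_le => //; apply: drift_at_ge0.
Qed.

Lemma integral_qE_Dinf x y :
  \int[P]_w qE_Dinf w x y = limn (fun n => \int[P]_w (qE_Dn w x n y)%:E).
Proof.
apply: monotone_convergence => //.
- by move=> n; apply: measurable_qE_Dn.
- by move=> n w _; rewrite lee_fin qE_Dn_reward; apply/reward_ge0/drift_at_ge0.
- move=> w _ m n le_mn; rewrite lee_fin !qE_Dn_reward.
  by apply/reward_le => //; apply: drift_at_ge0.
Qed.

Lemma integral_walled_left_fin_num n : \int[P]_w (walled_left n w)%:E \is a fin_num.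
Proof.
rewrite ge0_fin_numE; last by apply: integral_ge0 => w _; rewrite lee_fin walled_left_ge0.
apply: (@le_lt_trans _ _ (\int[P]_w (cst (n%:R : R)%:E) w)).
  apply: ge0_le_integral => //.
  - by move=> w _; rewrite lee_fin walled_left_ge0.
  - apply: measurable_from_nonneg.
    exact: measurable_walled_reward n (@measurable_left_at R 0).
  - by move=> w _; rewrite lee_fin walled_left_le.
by rewrite integral_cst //= probability_setT mule1 ltry.
Qed.

Hypothesis P_stationary : stationary_nonneg P.

Lemma integral_shift (k : nat) (f : Omega_nonneg R -> \bar R) :
  measurable_fun setT f -> (forall w, 0 <= f w) ->
  \int[P]_w f (Defs.shift k w) = \int[P]_w f w.
Proof.
move=> mf f_ge0.
transitivity (\int[P]_(w in Defs.shift k @^-1` setT) (f \o Defs.shift k) w); first by [].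
rewrite -(ge0_integral_pushforward (measurable_shift_nonneg k)) //.
transitivity (\int[P]_(w in (id : Omega R -> Omega_nonneg R) @^-1` setT) (f \o id) w); last by [].
rewrite -(ge0_integral_pushforward (@measurable_id_nonneg R)) //.
apply: eq_measure_integral; [exact: measurable_id_nonneg | exact: measurable_shift_nonneg |].
by move=> ? ? A mA _; apply: P_stationary.
Qed.

Lemma integral_walled_drift_le1 n : \int[P]_w (walled_drift n w)%:E <= 1.
Proof.
have mD := measurable_walled_reward n (@measurable_drift_at R 0).
have mL := measurable_walled_reward n (@measurable_left_at R 0).
have L_ge0 (w : Omega R) : 0 <= (walled_left n w)%:E by rewrite lee_fin walled_left_ge0.
have D_ge0 (w : Omega R) : 0 <= (walled_drift n w)%:E by rewrite lee_fin walled_drift_ge0.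
rewrite -(leeD2rE _ _ (integral_walled_left_fin_num n)) -ge0_integralD //; last 2 first.
- exact: measurable_from_nonneg mD.
- exact: measurable_from_nonneg mL.
apply: (@le_trans _ _ (\int[P]_w (1 + (walled_left n (Defs.shift 1 w))%:E))).
  apply: ge0_le_integral => //.
  - by move=> w _; rewrite adde_ge0.
  - by apply: emeasurable_funD; apply: measurable_from_nonneg.
  - apply: emeasurable_funD => //.
    exact: measurableT_comp mL (measurable_shift_nonneg 1).
  - by move=> w _; rewrite -EFinD lee_fin walled_drift_left_le.
rewrite ge0_integralD //; last exact: measurableT_comp mL (measurable_shift_nonneg 1).
by rewrite integral_cst //= probability_setT mul1e (integral_shift 1 mL).
Qed.

Lemma integral_qE_Dn_le1 (x : nat) n : \int[P]_w (qE_Dn w 0 n x%:Z)%:E <= 1.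
Proof.
have mD := measurable_walled_reward n (@measurable_drift_at R 0).
apply: le_trans (integral_walled_drift_le1 n).
rewrite -(integral_shift x mD); last by move=> w; rewrite lee_fin walled_drift_ge0.
apply: ge0_le_integral => //.
- by move=> w _; rewrite lee_fin qE_Dn_reward; apply/reward_ge0/drift_at_ge0.
- exact: measurable_qE_Dn.
- exact: measurableT_comp mD (measurable_shift_nonneg x).
- by move=> w _; rewrite lee_fin qE_Dn_reward reward_drift_le_walled.
Qed.

End Integration.

Unset Implicit Arguments.

Theorem mainTheorem11 (R : realType) (P : probability (Omega R) R) :
  stationary_nonneg P ->
  forall x : nat, (\int[P]_w qE_Dinf w 0 x%:Z <= 1)%E.
Proof.
move=> P_stationary x; rewrite integral_qE_Dinf.
apply: lime_le; first exact/ereal_nondecreasing_is_cvgn/nondecreasing_integral_qE_Dn.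
exact/nearW/integral_qE_Dn_le1.
Qed.
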